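(* Let $s,x,y,t\in\mathbb{C}$ with $sy+xt+1=x^2+y^2$. Let $F$ be a symmetric signature of arity $r+1$ and $G$ a symmetric signature of arity $w+1$ on $\{R,G,B\}$ ($r,w\ge0$), both generalized Fibonacci gates with parameters $s,x,y,t$. Define $H:\{R,G,B\}^{r+w}\to\mathbb{C}$ by $H(y_1,\dots,y_{r+w})=\sum_{z\in\{R,G,B\}}F(y_1,\dots,y_r,z)\,G(y_{r+1},\dots,y_{r+w},z)$. Then $H$ is symmetric and is a generalized Fibonacci gate with parameters $s,x,y,t$.
   Context: A signature of arity $n$ on $\{R,G,B\}$ is a function $\{R,G,B\}^n\to\mathbb{C}$; symmetric means invariant under permutations of its variables, and then $g_{i,j,k}$ denotes its value on inputs with $i$ entries $R$, $j$ entries $G$, $k$ entries $B$. A symmetric signature $g$ of arity $n\ge2$ is a generalized Fibonacci gate with parameters $s,x,y,t$ (where $sy+xt+1=x^2+y^2$) if for all $i,j,k\ge0$ with $i+j+k=n$, $i\ge2$: $g_{i-2,j+2,k}=g_{i,j,k}+s\,g_{i-1,j+1,k}+x\,g_{i-1,j,k+1}$, $g_{i-2,j+1,k+1}=x\,g_{i-1,j+1,k}+y\,g_{i-1,j,k+1}$, $g_{i-2,j,k+2}=g_{i,j,k}+y\,g_{i-1,j+1,k}+t\,g_{i-1,j,k+1}$. Signatures of arity $\le1$ are considered generalized Fibonacci gates for any parameters. *)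

From HB Require Import structures.
From mathcomp Require Import all_boot all_order all_algebra all_fingroup complex.
From mathcomp Require Import Rstruct.
Set Implicit Arguments. Unset Strict Implicit. Unset Printing Implicit Defensive.
Import GRing.Theory.
Local Open Scope ring_scope.

Definition CC : fieldType := (Rdefinitions.R)[i].

Inductive color := cR | cG | cB.
Definition color_code (c : color) : 'I_3 :=
  match c with cR => inord 0 | cG => inord 1 | cB => inord 2 end.
Definition color_decode (i : 'I_3) : color :=
  match val i with 0 => cR | 1 => cG | _ => cB end.
Lemma color_codeK : cancel color_code color_decode.
Proof. by case; rewrite /color_decode /= inordK. Qed.
HB.instance Definition _ := Finite.copy color (can_type color_codeK).

Definition signature (n : nat) := {ffun 'I_n -> color} -> CC.

Definition sym_signature n (f : signature n) : Prop :=
  forall (p : 'S_n) (u : {ffun 'I_n -> color}), f [ffun m => u (p m)] = f u.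

(* the canonical input with i entries R, then j entries G, then the rest B;
   when i + j + k = n it has exactly i R's, j G's and k B's *)
Definition canon_input n (i j : nat) : {ffun 'I_n -> color} :=
  [ffun m : 'I_n => if (m < i)%N then cR else if (m < i + j)%N then cG else cB].

(* g_{i,j,k} for a symmetric signature g (k is determined by n - i - j) *)
Definition gval n (g : signature n) (i j k : nat) : CC := g (canon_input n i j).

Definition gen_fib_gate n (g : signature n) (s x y t : CC) : Prop :=
  (n <= 1)%N \/
  forall i j k : nat, (i + j + k)%N = n -> (2 <= i)%N ->
    [/\ gval g (i-2) (j+2) k = gval g i j k + s * gval g (i-1) (j+1) k
                               + x * gval g (i-1) j (k+1),
        gval g (i-2) (j+1) (k+1) = x * gval g (i-1) (j+1) k + y * gval g (i-1) j (k+1)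
      & gval g (i-2) j (k+2) = gval g i j k + y * gval g (i-1) (j+1) k
                               + t * gval g (i-1) j (k+1)].

Definition inputs n (u : {ffun 'I_n -> color}) : seq color := [seq u m | m <- enum 'I_n].

Definition contract r w (F : signature r.+1) (G : signature w.+1) : signature (r + w) :=
  fun u => \sum_(z : color)
    F [ffun m : 'I_r.+1 => if (m < r)%N then nth cR (inputs u) m else z]
    * G [ffun m : 'I_w.+1 => if (m < w)%N then nth cR (inputs u) (r + m) else z].

From mathcomp Require Import all_boot all_algebra perm.
From mathcomp Require Import ring zify.
Set Implicit Arguments.
Unset Strict Implicit.
Unset Printing Implicit Defensive.
Import GRing.Theory.
Local Open Scope ring_scope.

(* Let A_R = 1 and let A_G, A_B be the symmetric 3x3 matrices [stepG] and
   [stepB].  The condition s y + x t + 1 = x^2 + y^2 is exactly what makes A_G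
   and A_B commute and satisfy the three quadratic relations of the gate, so a
   symmetric generalized Fibonacci gate g of arity n takes the value
   <f, A_G^j A_B^k e0> on inputs with j entries G and k entries B, where
   f = (g_{n,0,0}, g_{n-1,1,0}, g_{n-1,0,1}).  The contraction of two such
   gates is then H = sum_z <f, A_z P> <f', A_z Q>, with P, Q the vectors of the
   two halves of the input.  By the quadratic relations this pairing does not
   change when a factor A_G or A_B is moved from P to Q; hence H depends only
   on the total counts (j, k), and it is linear in A_G^j A_B^k e0, so it
   inherits the recurrences. *)

Lemma eq_colorE (a b : color) :
  (a == b) = match a, b with cR, cR | cG, cG | cB, cB => true | _, _ => false end.
Proof. by case: a; case: b; rewrite ?eqxx //; apply/negbTE/eqP. Qed.

Lemma sum_color (V : nmodType) (E : color -> V) :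
  \sum_(z : color) E z = E cR + E cG + E cB.
Proof.
have enum_colorP : perm_eq (index_enum color) [:: cR; cG; cB].
  apply: uniq_perm; rewrite ?index_enum_uniq //= ?inE ?eq_colorE // => c.
  by rewrite mem_index_enum !inE !eq_colorE; case: c.
by rewrite (perm_big _ enum_colorP) !big_cons big_nil /= addr0 addrA.
Qed.

Section TransferMatrices.

Variables (R : comPzRingType) (s x y t : R).
Hypothesis fib_param : s * y + x * t + 1 = x ^+ 2 + y ^+ 2.

Record triple := Triple { tr0 : R; tr1 : R; tr2 : R }.

Definition addt (P Q : triple) := Triple (tr0 P + tr0 Q) (tr1 P + tr1 Q) (tr2 P + tr2 Q).
Definition scalet (a : R) (P : triple) := Triple (a * tr0 P) (a * tr1 P) (a * tr2 P).
Definition dott (f P : triple) := tr0 f * tr0 P + tr1 f * tr1 P + tr2 f * tr2 P.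
Definition e0 := Triple 1 0 0.

(* Multiplication by A_G = [[0,1,0],[1,s,x],[0,x,y]] and
   A_B = [[0,0,1],[0,x,y],[1,y,t]]: the effect of turning one input R into G,
   resp. into B. *)
Definition stepG (P : triple) :=
  Triple (tr1 P) (tr0 P + s * tr1 P + x * tr2 P) (x * tr1 P + y * tr2 P).
Definition stepB (P : triple) :=
  Triple (tr2 P) (x * tr1 P + y * tr2 P) (tr0 P + y * tr1 P + t * tr2 P).
Definition step (z : color) := match z with cR => id | cG => stepG | cB => stepB end.

Lemma eq_mod_fib_param (c a b : R) :
  a - b = c * (x ^+ 2 + y ^+ 2 - (s * y + x * t + 1)) -> a = b.
Proof. by rewrite fib_param subrr mulr0 => /subr0_eq. Qed.

Lemma stepGG P : stepG (stepG P) = addt P (addt (scalet s (stepG P)) (scalet x (stepB P))).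
Proof.
case: P => a b c; congr Triple => /=; try ring.
by apply: (@eq_mod_fib_param c); ring.
Qed.

Lemma stepGB P : stepG (stepB P) = addt (scalet x (stepG P)) (scalet y (stepB P)).
Proof.
case: P => a b c; congr Triple => /=; try ring.
by apply: (@eq_mod_fib_param (- c)); ring.
Qed.

Lemma stepBG P : stepB (stepG P) = addt (scalet x (stepG P)) (scalet y (stepB P)).
Proof.
case: P => a b c; congr Triple => /=; try ring.
by apply: (@eq_mod_fib_param (- b)); ring.
Qed.

Lemma stepBB P : stepB (stepB P) = addt P (addt (scalet y (stepG P)) (scalet t (stepB P))).
Proof.
case: P => a b c; congr Triple => /=; try ring.
by apply: (@eq_mod_fib_param b); ring.
Qed.

Definition fibM (j k : nat) := iter j stepG (iter k stepB e0).

Lemma fibMSr j k : fibM j k.+1 = stepB (fibM j k).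
Proof. by elim: j => //= j ->; rewrite stepGB stepBG. Qed.

Lemma iter_stepG_fibM a j k : iter a stepG (fibM j k) = fibM (a + j) k.
Proof. by rewrite /fibM iterD. Qed.

Lemma iter_stepB_fibM a j k : iter a stepB (fibM j k) = fibM j (a + k).
Proof. by elim: a => //= a ->; rewrite fibMSr. Qed.

Lemma fibM_rcons (l : seq color) z :
  fibM (count_mem cG (rcons l z)) (count_mem cB (rcons l z))
  = step z (fibM (count_mem cG l) (count_mem cB l)).
Proof.
rewrite -cats1 !count_cat /= !eq_colorE.
by case: z; rewrite /= ?addn0 ?addn1 ?fibMSr.
Qed.

Definition fib_rec (Psi : nat -> nat -> R) := forall j k,
  [/\ Psi j.+2 k = Psi j k + s * Psi j.+1 k + x * Psi j k.+1,
      Psi j.+1 k.+1 = x * Psi j.+1 k + y * Psi j k.+1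
    & Psi j k.+2 = Psi j k + y * Psi j.+1 k + t * Psi j k.+1].

Lemma fib_rec_linear (L : triple -> R) :
  (forall P Q, L (addt P Q) = L P + L Q) -> (forall a P, L (scalet a P) = a * L P) ->
  fib_rec (fun j k => L (fibM j k)).
Proof.
move=> LD LZ j k; rewrite !fibMSr /=.
by rewrite stepGG stepBG stepBB !LD !LZ !addrA.
Qed.

Lemma dott_addr f P Q : dott f (addt P Q) = dott f P + dott f Q.
Proof. by rewrite /dott /=; ring. Qed.

Lemma dott_scaler f a P : dott f (scalet a P) = a * dott f P.
Proof. by rewrite /dott /=; ring. Qed.

Lemma fib_rec_dott f : fib_rec (fun j k => dott f (fibM j k)).
Proof. exact: (@fib_rec_linear (dott f) (@dott_addr f) (@dott_scaler f)). Qed.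

Definition pairing (f g P Q : triple) :=
  \sum_(z : color) dott f (step z P) * dott g (step z Q).

Lemma pairing_addl f g P1 P2 Q :
  pairing f g (addt P1 P2) Q = pairing f g P1 Q + pairing f g P2 Q.
Proof. by rewrite /pairing !sum_color /dott /=; ring. Qed.

Lemma pairing_scalel f g a P Q : pairing f g (scalet a P) Q = a * pairing f g P Q.
Proof. by rewrite /pairing !sum_color /dott /=; ring. Qed.

Lemma fib_rec_pairing f g Q : fib_rec (fun j k => pairing f g (fibM j k) Q).
Proof.
apply: (@fib_rec_linear (pairing f g ^~ Q)) => [P1 P2 | a P].
  exact: pairing_addl.
exact: pairing_scalel.
Qed.

Lemma pairing_stepG f g P Q : pairing f g (stepG P) Q = pairing f g P (stepG Q).
Proof.
rewrite /pairing !sum_color /= !stepGG !stepBG.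
move: (stepG P) (stepB P) (stepG Q) (stepB Q) => GP BP GQ BQ.
by rewrite /dott /=; ring.
Qed.

Lemma pairing_stepB f g P Q : pairing f g (stepB P) Q = pairing f g P (stepB Q).
Proof.
rewrite /pairing !sum_color /= !stepGB !stepBB.
move: (stepG P) (stepB P) (stepG Q) (stepB Q) => GP BP GQ BQ.
by rewrite /dott /=; ring.
Qed.

Lemma pairing_fibM f g j1 k1 j2 k2 :
  pairing f g (fibM j1 k1) (fibM j2 k2) = pairing f g (fibM (j1 + j2) (k1 + k2)) e0.
Proof.
have moveG a P Q : pairing f g P (iter a stepG Q) = pairing f g (iter a stepG P) Q.
  by elim: a P => //= a IH P; rewrite -pairing_stepG IH -iterSr.
have moveB a P Q : pairing f g P (iter a stepB Q) = pairing f g (iter a stepB P) Q.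
  by elim: a P => //= a IH P; rewrite -pairing_stepB IH -iterSr.
by rewrite {2}/fibM moveG moveB iter_stepG_fibM iter_stepB_fibM addnC (addnC k2).
Qed.

End TransferMatrices.

Arguments e0 {R}.

Definition ncol n (c : color) (u : {ffun 'I_n -> color}) := count_mem c (inputs u).

Lemma count_colors (l : seq color) :
  (count_mem cR l + count_mem cG l + count_mem cB l)%N = size l.
Proof. by elim: l => //= -[] l <-; rewrite !eq_colorE /=; lia. Qed.

Lemma size_inputs n (u : {ffun 'I_n -> color}) : size (inputs u) = n.
Proof. by rewrite size_map size_enum_ord. Qed.

Lemma ncol_sum n (u : {ffun 'I_n -> color}) : (ncol cR u + ncol cG u + ncol cB u)%N = n.
Proof. by rewrite count_colors size_inputs. Qed.

Lemma nth_inputs n (u : {ffun 'I_n -> color}) (i : 'I_n) : nth cR (inputs u) i = u i.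
Proof. by rewrite (nth_map i) ?size_enum_ord // nth_ord_enum. Qed.

Lemma inputs_inj n : injective (@inputs n).
Proof. by move=> u v uv; apply/ffunP => i; rewrite -!nth_inputs uv. Qed.

Lemma inputs_ffun n (h : nat -> color) :
  inputs [ffun m : 'I_n => h m] = map h (iota 0 n).
Proof. by rewrite /inputs -val_enum_ord -map_comp; apply: eq_map => m; rewrite ffunE. Qed.

Lemma inputs_perm n (u : {ffun 'I_n -> color}) (p : 'S_n) :
  inputs [ffun m => u (p m)] = [tuple tnth [tuple u i | i < n] (p i) | i < n].
Proof. by apply: eq_map => m; rewrite ffunE tnth_mktuple. Qed.

Lemma ncol_perm n (u : {ffun 'I_n -> color}) (p : 'S_n) c :
  ncol c [ffun m => u (p m)] = ncol c u.
Proof.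
have u_perm : perm_eq (inputs [ffun m => u (p m)]) [tuple u i | i < n].
  by apply/tuple_permP; exists p; rewrite inputs_perm.
by move/seq.permP: u_perm; apply.
Qed.

Lemma sym_signature_ncol n (g : signature n) (u v : {ffun 'I_n -> color}) :
  sym_signature g -> (forall c, ncol c u = ncol c v) -> g u = g v.
Proof.
move=> g_sym same_ncol.
have /tuple_permP[p vp] : perm_eq (inputs v) [tuple u i | i < n].
  by apply/allP => c _; apply/eqP; exact: (esym (same_ncol c)).
suff -> : v = [ffun m => u (p m)] by rewrite g_sym.
by apply: inputs_inj; rewrite vp inputs_perm.
Qed.

Lemma map_const_in (T : eqType) (U : Type) (h : T -> U) (c : U) (l : seq T) :
  {in l, forall m, h m = c} -> map h l = nseq (size l) c.
Proof. by move=> /eq_in_map ->; elim: l => //= _ l ->. Qed.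

Lemma inputs_canon n i j k : (i + j + k)%N = n ->
  inputs (canon_input n i j) = nseq i cR ++ nseq j cG ++ nseq k cB.
Proof.
move=> <-.
rewrite (inputs_ffun _ (fun m => if m < i then cR else if m < i + j then cG else cB))%N.
rewrite !iotaD !map_cat add0n.
rewrite (@map_const_in _ _ _ cR); last by move=> m; rewrite mem_iota => /andP[_ ->].
rewrite (@map_const_in _ _ _ cG); last first.
  by move=> m; rewrite mem_iota => /andP[i_le ->]; rewrite ltnNge i_le.
rewrite (@map_const_in _ _ _ cB); last first.
  by move=> m; rewrite mem_iota => /andP[ij_le _]; rewrite !ltnNge ij_le (leq_trans (leq_addr j i)).
by rewrite !size_iota catA.
Qed.

Lemma ncol_canon n i j k : (i + j + k)%N = n ->
  [/\ ncol cR (canon_input n i j) = i, ncol cG (canon_input n i j) = j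
    & ncol cB (canon_input n i j) = k].
Proof.
move/inputs_canon; rewrite /ncol => ->.
by rewrite !count_cat !count_nseq /= !eq_colorE /=; split; lia.
Qed.

Lemma sym_signature_canon n (g : signature n) (u : {ffun 'I_n -> color}) :
  sym_signature g -> g u = gval g (ncol cR u) (ncol cG u) (ncol cB u).
Proof.
move=> g_sym; have [eR eG eB] := ncol_canon (ncol_sum u).
by apply: sym_signature_ncol => // -[]; rewrite ?eR ?eG ?eB.
Qed.

Lemma inputs_extend n (h : nat -> color) z :
  inputs [ffun m : 'I_n.+1 => if (m < n)%N then h m else z] = rcons (map h (iota 0 n)) z.
Proof.
rewrite (inputs_ffun _ (fun m => if m < n then h m else z))%N -addn1 iotaD map_cat /=.
rewrite ltnn cats1; congr rcons; apply/eq_in_map => m.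
by rewrite mem_iota => /andP[_ ->].
Qed.

Lemma inputs_split_left r w (u : {ffun 'I_(r + w) -> color}) z :
  inputs [ffun m : 'I_r.+1 => if (m < r)%N then nth cR (inputs u) m else z]
  = rcons (take r (inputs u)) z.
Proof. by rewrite inputs_extend map_nth_iota0 // size_inputs leq_addr. Qed.

Lemma inputs_split_right r w (u : {ffun 'I_(r + w) -> color}) z :
  inputs [ffun m : 'I_w.+1 => if (m < w)%N then nth cR (inputs u) (r + m) else z]
  = rcons (drop r (inputs u)) z.
Proof.
rewrite (inputs_extend _ (fun m => nth cR (inputs u) (r + m))).
rewrite (map_comp (nth cR (inputs u)) (addn r)) -iotaDl addn0 map_nth_iota.
  by rewrite take_oversize // size_drop size_inputs addKn.
by rewrite size_inputs addKn.
Qed.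

Section FibonacciGates.

Variables s x y t : CC.
Hypothesis fib_param : s * y + x * t + 1 = x ^+ 2 + y ^+ 2.

Lemma gen_fib_gate_of_rec n (g : signature n) (Psi : nat -> nat -> CC) :
  fib_rec s x y t Psi -> (forall i j k, (i + j + k)%N = n -> gval g i j k = Psi j k) ->
  gen_fib_gate g s x y t.
Proof.
move=> rec gE; right=> i j k n_eq i_ge2; rewrite !gE ?addn1 ?addn2; try lia.
exact: rec.
Qed.

Lemma gen_fib_gate_rec_eq n (g : signature n) (Psi : nat -> nat -> CC) :
  gen_fib_gate g s x y t -> fib_rec s x y t Psi ->
  (forall i j k, (i + j + k)%N = n -> (j + k <= 1)%N -> gval g i j k = Psi j k) ->
  forall i j k, (i + j + k)%N = n -> gval g i j k = Psi j k.
Proof.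
move=> gate rec base.
suff bounded : forall d i j k,
    (j + k <= d)%N -> (i + j + k)%N = n -> gval g i j k = Psi j k.
  by move=> i j k; apply: bounded.
elim=> [|d IH] i j k jk_le n_eq; first by apply: base; lia.
have [jk_le1 | jk_ge2] := leqP (j + k) 1; first exact: base.
case: gate => [n_le1 | gate]; first lia.
have [j_ge2 | j_le1] := leqP 2 j.
  have [j' Ej] : exists j', j = j'.+2 by exists (j - 2)%N; lia.
  subst j.
  have [|E _ _] := gate i.+2 j' k _ isT; first lia.
  rewrite !subSS !subn0 !addn2 !addn1 in E.
  rewrite E !IH; try lia; by case: (rec j' k).
have [k_ge2 | k_le1] := leqP 2 k.
  have [k' Ek] : exists k', k = k'.+2 by exists (k - 2)%N; lia.
  subst k.
  have [|_ _ E] := gate i.+2 j k' _ isT; first lia.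
  rewrite !subSS !subn0 !addn2 !addn1 in E.
  rewrite E !IH; try lia; by case: (rec j k').
have [Ej Ek] : j = 1%N /\ k = 1%N by lia.
subst j k.
have [|_ E _] := gate i.+2 0 0 _ isT; first lia.
rewrite !subSS !subn0 !add0n in E.
rewrite E !IH; try lia; by case: (rec 0 0).
Qed.

Definition seed n (g : signature n) : triple CC :=
  Triple (gval g n 0 0) (gval g n.-1 1 0) (gval g n.-1 0 1).

Lemma gen_fib_gate_fibM n (g : signature n) : gen_fib_gate g s x y t ->
  forall i j k, (i + j + k)%N = n -> gval g i j k = dott (seed g) (fibM s x y t j k).
Proof.
move=> gate; apply: (gen_fib_gate_rec_eq gate (fib_rec_dott fib_param (seed g))).
move=> i [|[|j]] [|[|k]] // n_eq _.
all: rewrite /dott /seed /fibM /e0 /stepG /stepB; cbn [iter tr0 tr1 tr2].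
- by rewrite (_ : i = n); [ring | lia].
- by rewrite (_ : i = n.-1); [ring | lia].
- by rewrite (_ : i = n.-1); [ring | lia].
Qed.

Lemma sym_gen_fib_gateE n (g : signature n) :
  sym_signature g -> gen_fib_gate g s x y t ->
  forall u, g u = dott (seed g) (fibM s x y t (ncol cG u) (ncol cB u)).
Proof.
move=> g_sym gate u.
by rewrite (sym_signature_canon u g_sym); apply: gen_fib_gate_fibM; rewrite ?ncol_sum.
Qed.

Lemma contract_fibM r w (F : signature r.+1) (G : signature w.+1) :
  sym_signature F -> sym_signature G ->
  gen_fib_gate F s x y t -> gen_fib_gate G s x y t ->
  forall u, contract F G u =
    pairing s x y t (seed F) (seed G) (fibM s x y t (ncol cG u) (ncol cB u)) e0.
Proof.
move=> F_sym G_sym F_gate G_gate u.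
rewrite /ncol -[in RHS](cat_take_drop r (inputs u)) !count_cat -(pairing_fibM fib_param).
apply: eq_bigr => z _.
rewrite (sym_gen_fib_gateE F_sym F_gate) (sym_gen_fib_gateE G_sym G_gate) /ncol.
by rewrite inputs_split_left inputs_split_right !(fibM_rcons fib_param).
Qed.

End FibonacciGates.

Theorem mainTheorem5 (s x y t : CC) (r w : nat)
    (F : signature r.+1) (G : signature w.+1) :
  s * y + x * t + 1 = x ^+ 2 + y ^+ 2 ->
  sym_signature F -> sym_signature G ->
  gen_fib_gate F s x y t -> gen_fib_gate G s x y t ->
  sym_signature (contract F G) /\ gen_fib_gate (contract F G) s x y t.
Proof.
move=> fib_param F_sym G_sym F_gate G_gate.
have contractE := contract_fibM fib_param F_sym G_sym F_gate G_gate.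
split; first by move=> p u; rewrite !contractE !ncol_perm.
apply: gen_fib_gate_of_rec (fib_rec_pairing fib_param _ _ _) _.
move=> i j k /ncol_canon[_ eG eB].
by rewrite /gval contractE eG eB.
Qed.
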